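(* Let $\alpha>0$, $\epsilon\in(0,1/2)$, consider Poisson percolation on $\mathbb{Z}^2$, let $n=n(p_c+\epsilon,t)$ and let $C_1>0$ be a constant. Then, as $t\to\infty$, the probability that there exists an edge inside the square $[-C_1\log n, C_1\log n]^2$ that is closed at time $t$ tends to $0$.
   Context: Poisson percolation: each nearest-neighbour edge of $\mathbb{Z}^2$ with midpoint $x$ is assigned an independent Poisson process of rate $\|x\|^{-\alpha}$, where $\|x\|=\max\{|x_1|,|x_2|\}$; the edge becomes open at the time of its first arrival (closed before it), so at time $t$ the edge with midpoint $x$ is open with probability $1-\exp(-t\|x\|^{-\alpha})$, independently over edges. $p_c=1/2$ and $n(p,t)=c_{p,\alpha}t^{1/\alpha}$ with $c_{p,\alpha}=(-\log(1-p))^{-1/\alpha}$. *)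

From HB Require Import structures.
From mathcomp Require Import all_boot all_order all_algebra.
From mathcomp Require Import all_classical all_reals all_analysis.
Set Implicit Arguments. Unset Strict Implicit. Unset Printing Implicit Defensive.
Import Order.TTheory GRing.Theory Num.Theory.
Local Open Scope ring_scope.

Section Poisson.
Variable R : realType.

(* A nearest-neighbour edge of Z^2 is encoded as (a, b, d): it joins (a,b)
   to (a+1,b) if d = true (horizontal), and to (a,b+1) if d = false. *)
Definition edge := (int * int * bool)%type.

Definition edge_end1 (e : edge) : int * int := (e.1.1, e.1.2).
Definition edge_end2 (e : edge) : int * int :=
  if e.2 then (e.1.1 + 1, e.1.2) else (e.1.1, e.1.2 + 1).

Definition edge_mid (e : edge) : R * R :=
  if e.2 then ((e.1.1)%:~R + 2^-1, (e.1.2)%:~R)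
  else ((e.1.1)%:~R, (e.1.2)%:~R + 2^-1).

Definition supnorm (x : R * R) : R := Num.max `|x.1| `|x.2|.

(* probability that the edge e is open at time t in Poisson percolation
   with exponent alpha: 1 - exp(-t ||x||^(-alpha)), x the midpoint *)
Definition open_prob (alpha t : R) (e : edge) : R :=
  1 - expR (- (t * (supnorm (edge_mid e)) `^ (- alpha))).

Definition in_square (L : R) (v : int * int) : bool :=
  (`|(v.1)%:~R| <= L) && (`|(v.2)%:~R| <= L).

Definition int_range (L : R) : seq int :=
  let N := (`|Num.floor `|L| |%N + 1)%N in
  [seq (i%:Z - N%:Z) | i <- iota 0 (N + N + 1)].

Definition square_edges (L : R) : seq edge :=
  [seq e <- [seq (x.1, x.2, d) | x <- [seq (a, b) | a <- int_range L, b <- int_range L],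
                                d <- [:: true; false]]
     | in_square L (edge_end1 e) && in_square L (edge_end2 e)].

(* Product (independent) law of the open/closed states of the finitely many
   edges of a finite edge set s at time t: a configuration w assigns true
   (open) or false (closed) to each edge. *)
Definition config_weight (alpha t : R) (s : seq edge)
    (w : {ffun seq_sub s -> bool}) : R :=
  \prod_(e : seq_sub s) (if w e then open_prob alpha t (val e)
                         else 1 - open_prob alpha t (val e)).

Definition prob_some_closed (alpha t : R) (s : seq edge) : R :=
  \sum_(w : {ffun seq_sub s -> bool} | [exists e, ~~ w e]) config_weight alpha t w.

Definition p_c : R := 2^-1.
Definition n_pt (alpha p t : R) : R :=
  (- ln (1 - p)) `^ (- alpha^-1) * t `^ (alpha^-1).

End Poisson.

From HB Require Import structures.
From mathcomp Require Import all_boot all_order all_algebra.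
From mathcomp Require Import all_classical all_reals all_analysis.
From mathcomp Require Import ring lra zify.
Import Order.TTheory GRing.Theory Num.Theory.
Import numFieldNormedType.Exports.
Local Open Scope classical_set_scope.
Local Open Scope ring_scope.

(* By the union bound, some edge of the square [-L, L]^2 is closed with
   probability at most the sum of the closing probabilities.  Every such edge
   has a midpoint of sup-norm at most L, hence is closed with probability at
   most exp(-t / L^alpha), and there are O(L^2) of them.  For
   L = C1 log n(p_c + eps, t) = a + b log t, L grows slower than any power of
   t, so the estimate exp(-y) <= 4 / y^2 makes the bound O(1 / t). *)

Set Implicit Arguments. Unset Strict Implicit.

Lemma sum_prod_exists_false (R : comPzRingType) (I : finType) (p : I -> R) :
  \sum_(w : {ffun I -> bool} | [exists i, ~~ w i])
     \prod_i (if w i then p i else 1 - p i) = 1 - \prod_i p i.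
Proof.
have total : \sum_(w : {ffun I -> bool}) \prod_i (if w i then p i else 1 - p i) = 1.
  rewrite -(bigA_distr_bigA (fun i (b : bool) => if b then p i else 1 - p i)).
  by rewrite big1 // => i _; rewrite big_bool /= addrC subrK.
rewrite (bigID [pred w : {ffun I -> bool} | [exists i, ~~ w i]]) /= in total.
rewrite [X in _ + X](@big_pred1 _ _ _ _ [ffun=> true]) in total; last first.
  move=> w /=; rewrite negb_exists; apply/forallP/eqP => [wT|-> i]; last by rewrite ffunE.
  by apply/ffunP => i; rewrite ffunE; have := wT i; rewrite negbK.
rewrite [X in _ + X](eq_bigr p) in total; last by move=> i _; rewrite ffunE.
by apply/eqP; rewrite eq_sym subr_eq total.
Qed.

Lemma one_sub_prod_le_sum (R : realDomainType) (I : finType) (p : I -> R) :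
  (forall i, 0 <= p i <= 1) -> 1 - \prod_i p i <= \sum_i (1 - p i).
Proof.
move=> p01.
suff [] : (0 <= \prod_i p i <= 1) /\ 1 - \prod_i p i <= \sum_i (1 - p i) by [].
apply: (big_rec2 (fun x y => (0 <= x <= 1) /\ 1 - x <= y)).
  by rewrite ler01 lexx subrr.
move=> i x y _ [/andP[x0 x1] xy]; have /andP[pi0 pi1] := p01 i.
by split; [apply/andP; split|]; nra.
Qed.

Lemma card_seq_sub_le (T : choiceType) (s : seq T) : (#|{: seq_sub s}| <= size s)%N.
Proof.
rewrite cardE -(size_map val); apply: uniq_leq_size.
  by rewrite (map_inj_uniq val_inj) enum_uniq.
by move=> x /mapP[y _ ->]; exact: (valP y).
Qed.

Section SquareEdges.
Variable R : realType.

Lemma norm_intr_addV2_ge (a : int) : 2^-1 <= `|(a%:~R : R) + 2^-1|.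
Proof.
have [a0|a0] := lerP 0 a.
  have : (0 : R) <= a%:~R by rewrite ler0z.
  by move=> ?; rewrite ger0_norm; lra.
have : (a%:~R : R) <= (-1 : int)%:~R by rewrite ler_int; lia.
by rewrite intrN => ?; rewrite ler0_norm; lra.
Qed.

Lemma norm_intr_addV2_le (a : int) (L : R) :
  `|(a%:~R : R)| <= L -> `|((a + 1)%:~R : R)| <= L -> `|(a%:~R : R) + 2^-1| <= L.
Proof.
by rewrite intrD !ler_norml => /andP[? ?] /andP[? ?]; apply/andP; split; lra.
Qed.

Lemma supnorm_edge_mid_ge (e : edge) : 2^-1 <= supnorm (edge_mid R e).
Proof.
case: e => [[a b] []]; rewrite /edge_mid /supnorm /= le_max norm_intr_addV2_ge //.
exact: orbT.
Qed.

Lemma supnorm_edge_mid_le (L : R) (e : edge) :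
  e \in square_edges L -> supnorm (edge_mid R e) <= L.
Proof.
rewrite mem_filter => /andP[/andP[]] + + _.
case: e => [[a b] []]; rewrite /in_square /edge_end1 /edge_end2 /edge_mid /supnorm /=.
  by move=> /andP[? ?] /andP[? ?]; rewrite ge_max norm_intr_addV2_le.
by move=> /andP[? ?] /andP[? ?]; rewrite ge_max norm_intr_addV2_le ?andbT.
Qed.

Lemma size_square_edges_le (L : R) : 1 <= L ->
  (size (square_edges L))%:R <= 98 * L ^+ 2.
Proof.
move=> L1; have normL : `|L| = L by rewrite ger0_norm //; lra.
set N := (`|Num.floor `|L| |%N + 1)%N.
have N_le : (N%:R : R) <= L + 2.
  rewrite /N normL natrD natr_absz intr_norm.
  have := floor_le L; have := floorD1_gt L; rewrite intrD mulr1z => ? ?.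
  suff : `|(Num.floor L)%:~R : R| <= L + 1 by lra.
  by rewrite ler_norml; apply/andP; split; lra.
have size_le : (size (square_edges L) <= (N + N + 1) * (N + N + 1) * 2)%N.
  rewrite /square_edges size_filter (leq_trans (count_size _ _)) //.
  by rewrite !size_allpairs /int_range size_map size_iota.
clearbody N; apply: le_trans (_ : ((N + N + 1) * (N + N + 1) * 2)%:R <= _).
  by rewrite ler_nat.
have : (0 : R) <= N%:R by [].
by rewrite !natrM !natrD; nra.
Qed.

End SquareEdges.

Section ClosedEdges.
Variables (R : realType) (alpha t : R).
Hypotheses (alpha_gt0 : 0 < alpha) (t_ge0 : 0 <= t).

Lemma open_prob_itv (e : edge) : 0 <= open_prob alpha t e <= 1.
Proof.
rewrite /open_prob; set x := t * _.
have x0 : 0 <= x by rewrite mulr_ge0 ?powR_ge0.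
have expR_le1 : expR (- x) <= 1 by rewrite -expR0 ler_expR; lra.
by rewrite subr_ge0 expR_le1 lerBlDr lerDl expR_ge0.
Qed.

Lemma prob_some_closedE (s : seq edge) :
  prob_some_closed alpha t s = 1 - \prod_(e : seq_sub s) open_prob alpha t (val e).
Proof. exact: sum_prod_exists_false. Qed.

Lemma prob_some_closed_ge0 (s : seq edge) : 0 <= prob_some_closed alpha t s.
Proof.
by rewrite prob_some_closedE subr_ge0 prodr_ile1 // => e _; exact: open_prob_itv.
Qed.

Lemma closed_prob_le (L : R) (e : edge) : supnorm (edge_mid R e) <= L ->
  1 - open_prob alpha t e <= expR (- (t / L `^ alpha)).
Proof.
move=> mid_le; have mid_gt0 : 0 < supnorm (edge_mid R e).
  by apply: lt_le_trans (supnorm_edge_mid_ge R e); rewrite invr_gt0.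
rewrite /open_prob opprB addrC subrK ler_expR lerN2 ler_wpM2l // powRN.
rewrite lef_pV2 ?posrE ?powR_gt0 //; last exact: lt_le_trans mid_le.
by apply: ge0_ler_powR; rewrite ?nnegrE ?(ltW alpha_gt0) ?(ltW mid_gt0); lra.
Qed.

Lemma prob_some_closed_square_le (L : R) : 1 <= L ->
  prob_some_closed alpha t (square_edges L) <= 98 * L ^+ 2 * expR (- (t / L `^ alpha)).
Proof.
move=> L1; rewrite prob_some_closedE.
apply: le_trans (one_sub_prod_le_sum (fun e => open_prob_itv (val e))) _.
apply: le_trans (ler_sum _ (fun e _ => closed_prob_le (supnorm_edge_mid_le (valP e)))) _.
rewrite sumr_const -[X in X <= _]mulr_natl ler_wpM2r ?expR_ge0 //.
by apply: le_trans (size_square_edges_le L1); rewrite ler_nat card_seq_sub_le.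
Qed.

End ClosedEdges.

Section Growth.
Variable R : realType.

Lemma expRN_le_sqr (y : R) : 0 < y -> expR (- y) <= 4 / y ^+ 2.
Proof.
move=> y0; have y2_ge0 : 0 <= y / 2 by rewrite divr_ge0 // ltW.
have half_le : y / 2 <= expR (y / 2) by have := expR_ge1Dx (y / 2); lra.
have sqr_le : (y / 2) ^+ 2 <= expR y.
  have -> : expR y = expR (y / 2) ^+ 2 by rewrite expr2 -expRD -splitr.
  by rewrite ler_pXn2r ?nnegrE ?expR_ge0.
rewrite expRN (_ : 4 / y ^+ 2 = ((y / 2) ^+ 2)^-1); last by field; rewrite gt_eqF.
by rewrite lef_pV2 ?posrE ?expR_gt0 ?exprn_gt0 ?divr_gt0.
Qed.

Lemma affine_ln_le_powR (a b d t : R) : 0 < b -> 0 < d -> 1 <= t ->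
  a + b * ln t <= (`|a| + b / d) * t `^ d.
Proof.
move=> b0 d0 t1; have t0 : 0 < t by lra.
have td_ge1 : 1 <= t `^ d by rewrite -(powRr0 t) ler_powR // ltW.
have ln_le : ln t <= t `^ d / d.
  rewrite ler_pdivlMr // mulrC -ln_powR; apply/ltW/ln_sublinear.
  by rewrite powR_gt0.
have : a <= `|a| * t `^ d by apply: le_trans (ler_norm a) _; rewrite ler_peMr.
have : b * ln t <= b / d * t `^ d by rewrite mulrAC -mulrA ler_pM2l.
by rewrite mulrDl; lra.
Qed.

(* The growth exponent (2 (1 + alpha))^-1 is what makes L^(1 + alpha) = O(sqrt t). *)
Lemma sqr_mul_expRN_le (alpha t L K : R) : 0 < alpha -> 0 < t -> 0 < L ->
  L <= K * t `^ (2 * (1 + alpha))^-1 ->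
  L ^+ 2 * expR (- (t / L `^ alpha)) <= 4 * (K `^ (1 + alpha)) ^+ 2 / t.
Proof.
move=> alpha0 t0 L0 L_le; set d := (2 * (1 + alpha))^-1.
have K0 : 0 <= K.
  have : 0 < K * t `^ d by apply: lt_le_trans L_le.
  by rewrite pmulr_lgt0 ?powR_gt0 // => /ltW.
have y0 : 0 < t / L `^ alpha by rewrite divr_gt0 ?powR_gt0.
have powR_mul : L `^ (1 + alpha) = L * L `^ alpha.
  by rewrite powRD ?powRr1 ?(ltW L0) // (gt_eqF L0) implybT.
have powR_le : L `^ (1 + alpha) <= K `^ (1 + alpha) * t `^ 2^-1.
  have -> : (2^-1 : R) = d * (1 + alpha) by rewrite /d; field; lra.
  rewrite powRrM -powRM ?powR_ge0 //.
  by apply: ge0_ler_powR; rewrite ?nnegrE ?mulr_ge0 ?powR_ge0 //; lra.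
have sqr_le : (L `^ (1 + alpha)) ^+ 2 <= (K `^ (1 + alpha)) ^+ 2 * t.
  rewrite -[t in _ * t](sqr_sqrtr (ltW t0)) -powR12_sqrt ?(ltW t0) // -exprMn.
  by rewrite ler_pXn2r ?nnegrE ?mulr_ge0 ?powR_ge0.
apply: le_trans (_ : L ^+ 2 * (4 / (t / L `^ alpha) ^+ 2) <= _).
  by rewrite ler_wpM2l ?sqr_ge0 ?expRN_le_sqr.
have -> : L ^+ 2 * (4 / (t / L `^ alpha) ^+ 2) = 4 * (L `^ (1 + alpha)) ^+ 2 / t / t.
  by rewrite powR_mul; field; rewrite !gt_eqF ?powR_gt0.
by rewrite ler_pM2r ?invr_gt0 // ler_pdivrMr // -mulrA ler_pM2l.
Qed.

Lemma cvg_divr_pinfty (D : R) : D / t @[t --> +oo] --> 0.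
Proof.
rewrite -(mulr0 D); apply: cvgM; first exact: cvg_cst.
apply/cvgrVy; first by near=> t; rewrite invr_gt0; near: t; exact: nbhs_pinfty_gt.
by rewrite /unstable.inv_fun; under eq_fun do rewrite invrK; exact: cvg_id.
Unshelve. all: end_near.
Qed.

Lemma near_pinfty_affine_ln_ge (a b c : R) : 0 < b ->
  \forall t \near +oo, c <= a + b * ln t.
Proof.
move=> b0; near=> t.
have t_big : expR ((c - a) / b) < t by near: t; apply: nbhs_pinfty_gt; rewrite num_real.
have : (c - a) / b < ln t.
  by rewrite -(expRK ((c - a) / b)) ltr_ln ?posrE ?expR_gt0.
by rewrite ltr_pdivrMr //; lra.
Unshelve. all: end_near.
Qed.

End Growth.

Lemma ln_n_pt (R : realType) (alpha p t : R) : 0 < p < 1 -> 0 < t ->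
  ln (n_pt alpha p t) = ln ((- ln (1 - p)) `^ (- alpha^-1)) + alpha^-1 * ln t.
Proof.
move=> /andP[p0 p1] t0; have c0 : 0 < - ln (1 - p).
  by rewrite oppr_gt0 ln_lt0 //; apply/andP; split; lra.
by rewrite /n_pt lnM ?posrE ?powR_gt0 // [ln (t `^ _)]ln_powR.
Qed.

Unset Implicit Arguments. Set Strict Implicit.

Theorem lemma2 (R : realType) (alpha eps C1 : R) :
  0 < alpha -> 0 < eps -> eps < 2^-1 -> 0 < C1 ->
  (prob_some_closed alpha t
     (square_edges (C1 * ln (n_pt alpha (p_c R + eps) t))))
    @[t --> +oo] --> (0 : R).
Proof.
move=> alpha0 eps0 epsV2 C0.
have p01 : 0 < p_c R + eps < 1 by rewrite /p_c; apply/andP; split; lra.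
set a := C1 * ln ((- ln (1 - (p_c R + eps))) `^ (- alpha^-1)); set b := C1 / alpha.
have b0 : 0 < b by rewrite divr_gt0.
set K := `|a| + b / (2 * (1 + alpha))^-1.
apply: (squeeze_cvgr _ (cvg_cst 0) (cvg_divr_pinfty (392 * (K `^ (1 + alpha)) ^+ 2))).
near=> t.
have t0 : 0 < t by near: t; apply: nbhs_pinfty_gt; rewrite num_real.
have t1 : 1 <= t by near: t; apply: nbhs_pinfty_ge; rewrite num_real.
have L1 : 1 <= a + b * ln t by near: t; exact: near_pinfty_affine_ln_ge.
rewrite ln_n_pt // mulrDr mulrA -/a -/b prob_some_closed_ge0 ?(ltW t0) //=.
apply: le_trans (prob_some_closed_square_le alpha0 (ltW t0) L1) _.
have -> : 392 * (K `^ (1 + alpha)) ^+ 2 / t = 98 * (4 * (K `^ (1 + alpha)) ^+ 2 / t).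
  by ring.
rewrite -[leLHS]mulrA ler_pM2l // sqr_mul_expRN_le //; first lra.
by apply: affine_ln_le_powR; rewrite ?invr_gt0; lra.
Unshelve. all: end_near.
Qed.
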